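(* Let $N\ge3$ be odd. Define $v_0=1$, $v_1=1/2$ and, for $0<k<N-1$, $$v_{k+1}=\frac{\tfrac12(N^2-1)v_k+k(N^2-2k^2-3k-2)v_k-k(N^2-k^2)v_{k-1}}{(k+1)\big(N^2-(k+1)^2\big)}.$$ Then $\vec v=(v_0,\dots,v_{N-1})$ is an eigenvector, with rational entries, of the $N\times N$ matrix $J_N$ (symmetric tridiagonal with $(J_N)_{kk}=k(2k^2+3k+2-N^2)$, $(J_N)_{k,k+1}=(J_N)_{k+1,k}=(k+1)(N^2-(k+1)^2)$) with eigenvalue $(N^2-1)/2$, and hence also an eigenvector of the Pascal matrix $(T_N)_{jk}=\binom{j+k}{j}$ with eigenvalue $1$; every eigenvector of $J_N$ with eigenvalue $(N^2-1)/2$ is a scalar multiple of $\vec v$.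
   Context: Matrix indices start at $0$. *)

From HB Require Import structures.
From mathcomp Require Import all_boot all_order all_algebra.
Set Implicit Arguments. Unset Strict Implicit. Unset Printing Implicit Defensive.
Import Order.TTheory GRing.Theory Num.Theory.
Local Open Scope ring_scope.

Fixpoint vpair (N : nat) (k : nat) : rat * rat :=
  match k with
  | 0%N => (1, 1 / 2)
  | k'.+1 =>
      let: (a, b) := vpair N k' in
      (* a = v_{k'}, b = v_{k'+1}; k := k'+1 *)
      let kk : rat := k%:R in
      let n2 : rat := (N%:R) ^+ 2 in
      (b, ((n2 - 1) / 2 * b + kk * (n2 - 2 * kk ^+ 2 - 3 * kk - 2) * b
            - kk * (n2 - kk ^+ 2) * a)
           / ((kk + 1) * (n2 - (kk + 1) ^+ 2)))
  end.

Definition vseq (N k : nat) : rat := (vpair N k).1.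

Definition vvec (N : nat) : 'cV[rat]_N := \col_(k < N) vseq N k.

Definition Jdiag (N k : nat) : int := (k%:Z * (2 * k%:Z ^+ 2 + 3 * k%:Z + 2 - N%:Z ^+ 2))%R.
Definition Joff (N k : nat) : int := (k%:Z * (N%:Z ^+ 2 - k%:Z ^+ 2))%R.

Definition Jmat (R : pzRingType) (N : nat) : 'M[R]_N :=
  \matrix_(i < N, j < N)
    if i == j :> nat then (Jdiag N i)%:~R
    else if j == i.+1 :> nat then (Joff N j)%:~R
    else if i == j.+1 :> nat then (Joff N i)%:~R
    else 0.

Definition Tmat (R : pzRingType) (N : nat) : 'M[R]_N :=
  \matrix_(j < N, k < N) ('C(j + k, j))%:R.

Definition lamN (R : fieldType) (N : nat) : R := ((N%:R) ^+ 2 - 1) / 2.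

From HB Require Import structures.
From mathcomp Require Import all_boot all_order all_algebra.
From mathcomp Require Import ring lra zify.
Import Order.TTheory GRing.Theory Num.Theory.
Local Open Scope ring_scope.
Set Implicit Arguments. Unset Strict Implicit. Unset Printing Implicit Defensive.

(* An eigenvector of the tridiagonal matrix J, whose off-diagonal entries are
   nonzero, is determined by its first coordinate through the three-term
   recurrence of its first N - 1 rows, and the recurrence defining v is exactly
   that one; this gives uniqueness.  To see that lambda = (N^2 - 1)/2 is an
   eigenvalue at all, let L be the lower Pascal matrix ('C(i, j)), D the signs
   ((-1)^i) and S = L D.  Then S^2 = 1 and J S = S (2 lambda - J), so J - lambda
   anticommutes with the invertible S, which forces det (J - lambda) = 0 in odd
   dimension; the last equation of J v = lambda v thus comes for free.  Finally
   T = L L^T commutes with J, so T v = c v, and T S T = S gives c^2 = 1, while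
   c >= 0 because T is positive semidefinite. *)

Section Tridiagonal.
Variables (R : pzRingType) (N : nat) (d o : nat -> R).

Definition tridiag_mx : 'M[R]_N :=
  \matrix_(i < N, j < N)
    if i == j :> nat then d i
    else if j == i.+1 :> nat then o j
    else if i == j.+1 :> nat then o i
    else 0.

Lemma tr_tridiag_mx : tridiag_mx^T = tridiag_mx.
Proof.
apply/matrixP => i j; rewrite !mxE; move: (nat_of_ord i) (nat_of_ord j) => a b.
by repeat (case: eqP => ? /=); subst => //; lia.
Qed.

Hypotheses (o0 : o 0 = 0) (oN : o N = 0).

Lemma tridiag_mx_mulE m (A : 'M[R]_(N, m)) (g : nat -> R) i j :
  (forall l : 'I_N, A l j = g l) ->
  (tridiag_mx *m A) i j = o i * g i.-1 + d i * g i + o i.+1 * g i.+1.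
Proof.
move=> Ag; rewrite mxE.
transitivity (\sum_(l < N | l == i :> nat) d l * g l
    + \sum_(l < N | l == i.+1 :> nat) o l * g l
    + \sum_(l < N | l == i.-1 :> nat) (if (0 < i)%N then o i * g l else 0)).
  rewrite !(big_mkcond (fun l : 'I_N => _ == _)) -!big_split /=.
  apply: eq_bigr => l _; rewrite mxE Ag.
  move: (nat_of_ord l) (nat_of_ord i) => a b.
  case: (posnP b) => [->|b0] /=;
    by repeat (case: eqP => ? /=); subst; rewrite ?mul0r ?addr0 ?add0r //; lia.
rewrite (big_ord1_eq _ (fun l => d l * g l)) (big_ord1_eq _ (fun l => o l * g l)).
rewrite (big_ord1_eq _ (fun l => if (0 < i)%N then o i * g l else 0)) ltn_ord.
rewrite (leq_ltn_trans (leq_pred i) (ltn_ord i)).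
have -> : (if (i.+1 < N)%N then o i.+1 * g i.+1 else 0) = o i.+1 * g i.+1.
  by case: ltnP => // iN; rewrite (@anti_leq i.+1 N) ?ltn_ord ?iN // oN mul0r.
have -> : (if (0 < i)%N then o i * g i.-1 else 0) = o i * g i.-1.
  by case: posnP => // ->; rewrite o0 mul0r.
by rewrite addrC addrA.
Qed.

End Tridiagonal.

Lemma mulmx_tridiagE (R : comPzRingType) N (d o : nat -> R) m (A : 'M[R]_(m, N))
    (g : nat -> R) i j :
  o 0 = 0 -> o N = 0 -> (forall l : 'I_N, A i l = g l) ->
  (A *m tridiag_mx N d o) i j = g j.-1 * o j + g j * d j + g j.+1 * o j.+1.
Proof.
move=> o0 oN Ag; rewrite -[A *m _]trmxK trmx_mul tr_tridiag_mx mxE.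
rewrite (@tridiag_mx_mulE _ _ d o o0 oN _ _ g) => [|l]; last by rewrite mxE.
by rewrite ![o _ * _]mulrC ![d _ * _]mulrC.
Qed.

Lemma Jmat_tridiag (R : pzRingType) N :
  Jmat R N = tridiag_mx N (fun k => (Jdiag N k)%:~R) (fun k => (Joff N k)%:~R).
Proof. by []. Qed.

Lemma tr_Jmat (R : pzRingType) N : (Jmat R N)^T = Jmat R N.
Proof. by rewrite Jmat_tridiag tr_tridiag_mx. Qed.

Lemma intr_Jdiag (R : pzRingType) N k :
  (Jdiag N k)%:~R = k%:R * (2 * k%:R ^+ 2 + 3 * k%:R + 2 - N%:R ^+ 2) :> R.
Proof. by rewrite /Jdiag !expr2 !(intrM, intrD, intrB, intrN, mulrz_nat) -!pmulrn. Qed.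

Lemma intr_Joff (R : pzRingType) N k :
  (Joff N k)%:~R = k%:R * (N%:R ^+ 2 - k%:R ^+ 2) :> R.
Proof. by rewrite /Joff !expr2 !(intrM, intrD, intrB, intrN, mulrz_nat) -!pmulrn. Qed.

Lemma intr_Joff0 (R : pzRingType) N : (Joff N 0)%:~R = 0 :> R.
Proof. by rewrite intr_Joff mul0r. Qed.

Lemma intr_JoffN (R : pzRingType) N : (Joff N N)%:~R = 0 :> R.
Proof. by rewrite intr_Joff subrr mulr0. Qed.

Lemma intr_Joff_neq0 (R : numDomainType) N k :
  (0 < k < N)%N -> (Joff N k)%:~R != 0 :> R.
Proof.
move=> /andP[k0 kN]; rewrite intr_eq0 /Joff mulf_neq0 //; first by lia.
by rewrite subr_eq0 eqz_nat ?expn2; apply/eqP; nia.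
Qed.

Lemma vseq0 N : vseq N 0 = 1. Proof. by []. Qed.

Lemma vseq1 N : vseq N 1 = 1 / 2. Proof. by []. Qed.

Lemma vseqSS N k : vseq N k.+2 =
  let kk : rat := k.+1%:R in let n2 : rat := N%:R ^+ 2 in
  ((n2 - 1) / 2 * vseq N k.+1 + kk * (n2 - 2 * kk ^+ 2 - 3 * kk - 2) * vseq N k.+1
     - kk * (n2 - kk ^+ 2) * vseq N k) / ((kk + 1) * (n2 - (kk + 1) ^+ 2)).
Proof. by rewrite /vseq /=; case: (vpair N k). Qed.

Lemma Jmat_row_vseq N k : (k.+1 < N)%N ->
  (Joff N k)%:~R * vseq N k.-1 + (Jdiag N k)%:~R * vseq N k
    + (Joff N k.+1)%:~R * vseq N k.+1 = lamN rat N * vseq N k.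
Proof.
move=> kN; rewrite !intr_Joff intr_Jdiag /lamN.
case: k kN => [|k] kN; first by rewrite vseq0 vseq1 /=; field.
have Nk_neq0 : N%:R ^+ 2 - k.+2%:R ^+ 2 != 0 :> rat.
  by rewrite subr_eq0 -!natrX eqr_nat eqn_exp2r //; apply/eqP; lia.
rewrite vseqSS /= -!natr1 -!addrA.
field.
by rewrite -[2]/(2%:R) -natrD addn2 Nk_neq0 pnatr_eq0.
Qed.

Lemma tridiag_eigenvector_unique (R : idomainType) N (d o : nat -> R) (lam : R)
    (u w : nat -> R) :
  (forall k, (0 < k < N)%N -> o k != 0) ->
  (forall k, (k.+1 < N)%N -> o k * u k.-1 + d k * u k + o k.+1 * u k.+1 = lam * u k) ->
  (forall k, (k.+1 < N)%N -> o k * w k.-1 + d k * w k + o k.+1 * w k.+1 = lam * w k) ->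
  u 0 = w 0 -> forall k, (k < N)%N -> u k = w k.
Proof.
move=> o_neq0 Eu Ew uw0.
have next k : (k.+1 < N)%N -> u k.-1 = w k.-1 -> u k = w k -> u k.+1 = w k.+1.
  move=> kN uwp uwk; apply: (mulfI (o_neq0 k.+1 kN)).
  by apply: (addrI (o k * u k.-1 + d k * u k)); rewrite Eu // uwp uwk Ew.
suff uw2 k : (k.+1 < N)%N -> u k = w k /\ u k.+1 = w k.+1.
  by case=> [|k] kN //; case: (uw2 k kN).
elim: k => [|k IH] kN; first by split; last exact: next.
by have [uwk uwS] := IH (ltnW kN); split; last exact: next.
Qed.

Definition cvnth (R : pzRingType) N (w : 'cV[R]_N) (k : nat) : R :=
  oapp (fun i : 'I_N => w i 0) 0 (insub k).

Lemma cvnthE (R : pzRingType) N (w : 'cV[R]_N) (i : 'I_N) : cvnth w i = w i 0.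
Proof. by rewrite /cvnth valK. Qed.

Lemma Jmat_mulE (R : pzRingType) N m (A : 'M[R]_(N, m)) (g : nat -> R) i j :
  (forall l : 'I_N, A l j = g l) ->
  (Jmat R N *m A) i j
  = (Joff N i)%:~R * g i.-1 + (Jdiag N i)%:~R * g i + (Joff N i.+1)%:~R * g i.+1.
Proof.
by rewrite Jmat_tridiag; apply: tridiag_mx_mulE; [exact: intr_Joff0 | exact: intr_JoffN].
Qed.

Lemma ratr_lamN (R : numFieldType) N : ratr (lamN rat N) = lamN R N.
Proof. by rewrite /lamN fmorph_div rmorphB rmorphXn !rmorph_nat rmorph1. Qed.

Lemma Jmat_eigenvector_unique (R : numFieldType) N (w : 'cV[R]_N) :
  Jmat R N *m w = lamN R N *: w ->
  exists c : R, w = c *: map_mx (fun q : rat => ratr q) (vvec N).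
Proof.
move=> Jw; exists (cvnth w 0); apply/matrixP => i j; rewrite (ord1 j) !mxE -cvnthE.
apply: (tridiag_eigenvector_unique (d := fun k => (Jdiag N k)%:~R)
  (o := fun k => (Joff N k)%:~R) (lam := lamN R N) (u := cvnth w)
  (w := fun k => cvnth w 0 * ratr (vseq N k))) => //; first exact: intr_Joff_neq0.
- move=> k kN; have /matrixP/(_ (Ordinal (ltnW kN)) 0) := Jw.
  by rewrite (Jmat_mulE (g := cvnth w)) ?mxE -?cvnthE // => l; rewrite cvnthE.
- have ratr_intrM z x : ratr (z%:~R * x) = z%:~R * ratr x :> R.
    by rewrite rmorphM rmorph_int.
  move=> k kN; have := congr1 (@ratr R) (Jmat_row_vseq kN).
  rewrite !rmorphD /= !ratr_intrM [ratr (lamN _ _ * _)]rmorphM /= ratr_lamN => E.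
  by rewrite [RHS]mulrCA -E; ring.
- by rewrite /= vseq0 rmorph1 mulr1.
Qed.

Lemma sum_ord_truncate (V : nmodType) n m (F : nat -> V) :
  (m <= n)%N -> (forall l, (m <= l)%N -> F l = 0) ->
  \sum_(l < n) F l = \sum_(0 <= l < m) F l.
Proof.
move=> mn F0; rewrite -(big_mkord xpredT) (big_cat_nat (leq0n m) mn) /=.
rewrite [X in _ + X]big_nat_cond [X in _ + X]big1 ?addr0 //.
by move=> l /andP[/andP[ml _] _]; apply: F0.
Qed.

Lemma bin_add_sum j k : ('C(j + k, j) = \sum_(0 <= m < j.+1) 'C(j, m) * 'C(k, m))%N.
Proof.
rewrite -(binomial.Vandermonde j k j) big_rev_mkord subn0.
apply: eq_bigr => m _; have mj : (m <= j)%N by rewrite -ltnS.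
by rewrite subSS bin_sub // subKn.
Qed.

Section PascalFactorization.
Variables (R : comPzRingType) (N : nat).

Definition binom_mx : 'M[R]_N := \matrix_(i, j) 'C(i, j)%:R.
Definition sign_mx : 'M[R]_N := diag_mx (\row_i (-1) ^+ i).
Definition sbinom_mx : 'M[R]_N := binom_mx *m sign_mx.

Lemma alternating_binom_sum i j :
  \sum_(0 <= l < i.+1) (-1) ^+ l * 'C(i, l)%:R * 'C(l, j)%:R = (-1) ^+ j * (i == j)%:R :> R.
Proof.
elim: i j => [|i IH] j.
  by rewrite big_nat1 expr0 bin0 !mul1r bin0n; case: j => [|j]; rewrite ?expr0 ?mulr1 ?mulr0.
have ext k : \sum_(0 <= l < i.+2) (-1) ^+ l * 'C(i, l)%:R * 'C(l, k)%:R
           = (-1) ^+ k * (i == k)%:R :> R.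
  by rewrite big_nat_recr //= bin_small // mulr0 mul0r addr0 IH.
rewrite big_nat_recl // expr0 bin0 !mul1r.
under eq_bigr => l _ do rewrite binS natrD exprS mulN1r mulrDr mulrDl !mulNr.
rewrite big_split /= !sumrN.
have -> : \sum_(0 <= l < i.+1) (-1) ^+ l * 'C(i, l.+1)%:R * 'C(l.+1, j)%:R
          = 'C(0, j)%:R - (-1) ^+ j * (i == j)%:R :> R.
  rewrite -(ext j) [in RHS]big_nat_recl // expr0 bin0 !mul1r.
  under [in RHS]eq_bigr => l _ do rewrite exprS mulN1r !mulNr.
  by rewrite sumrN opprD addNKr opprK.
case: j => [|j].
  rewrite (eq_bigr (fun l => (-1) ^+ l * 'C(i, l)%:R * 'C(l, 0)%:R :> R)) => [|l _];
    last by rewrite !bin0.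
  by rewrite IH bin0n /=; ring.
under eq_bigr => l _ do rewrite binS natrD mulrDr.
by rewrite big_split /= !IH bin0n /= eqSS exprS; ring.
Qed.

Lemma sbinom_mxE i j : sbinom_mx i j = 'C(i, j)%:R * (-1) ^+ j.
Proof. by rewrite /sbinom_mx mul_mx_diag !mxE. Qed.

Lemma sign_mx_invol : sign_mx *m sign_mx = 1%:M.
Proof.
apply/matrixP => i j; rewrite /sign_mx mul_diag_mx !mxE.
by case: eqP => [->|]; rewrite ?mulr0 // mulr1n -exprD -signr_odd addnn odd_double.
Qed.

Lemma tr_sign_mx : sign_mx^T = sign_mx.
Proof. exact: tr_diag_mx. Qed.

Lemma sbinom_mx_invol : sbinom_mx *m sbinom_mx = 1%:M.
Proof.
apply/matrixP => i j; rewrite !mxE.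
under eq_bigr => l _ do rewrite !sbinom_mxE [_ * (-1) ^+ l]mulrC mulrA.
rewrite -mulr_suml (sum_ord_truncate (m := i.+1)
  (F := fun l => (-1) ^+ l * 'C(i, l)%:R * 'C(l, j)%:R)) ?ltn_ord // => [|l il]; last first.
  by rewrite bin_small // mulr0 mul0r.
by rewrite alternating_binom_sum mulrC mulrA -exprD -signr_odd addnn odd_double mul1r.
Qed.

Lemma Tmat_binom : Tmat R N = binom_mx *m binom_mx^T.
Proof.
apply/matrixP => j k; rewrite !mxE bin_add_sum natr_sum.
under [RHS]eq_bigr => m _ do rewrite !mxE -natrM.
rewrite (sum_ord_truncate (m := j.+1) (F := fun m => ('C(j, m) * 'C(k, m))%:R)) ?ltn_ord //.
by move=> m jm; rewrite bin_small.
Qed.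

Lemma binom_sign_binom : binom_mx *m sign_mx *m binom_mx = sign_mx.
Proof.
have := congr1 (mulmx^~ sign_mx) sbinom_mx_invol.
by rewrite /= mul1mx /sbinom_mx !mulmxA -[_ *m sign_mx *m sign_mx]mulmxA sign_mx_invol mulmx1.
Qed.

Lemma Tmat_sbinom_Tmat : Tmat R N *m sbinom_mx *m Tmat R N = sbinom_mx.
Proof.
have tr_bsb : binom_mx^T *m sign_mx *m binom_mx^T = sign_mx.
  by rewrite -tr_sign_mx -!trmx_mul mulmxA binom_sign_binom.
rewrite Tmat_binom /sbinom_mx -!mulmxA; congr (_ *m _).
have -> : binom_mx^T *m (binom_mx *m (sign_mx *m (binom_mx *m binom_mx^T)))
  = binom_mx^T *m (binom_mx *m sign_mx *m binom_mx) *m binom_mx^T by rewrite !mulmxA.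
by rewrite binom_sign_binom.
Qed.
End PascalFactorization.

Definition Kmat (R : pzRingType) N : 'M[R]_N :=
  tridiag_mx N (fun k => N%:R ^+ 2 - 1 - (Jdiag N k)%:~R) (fun k => (Joff N k)%:~R).

Lemma Kmat_sign (R : comPzRingType) N :
  Kmat R N *m sign_mx R N = sign_mx R N *m ((N%:R ^+ 2 - 1)%:M - Jmat R N).
Proof.
apply/matrixP => i j; rewrite /sign_mx mul_diag_mx mul_mx_diag !mxE.
rewrite -[i == j]/(i == j :> nat); move: (nat_of_ord i) (nat_of_ord j) => a b.
by repeat (case: eqP => ? /=); subst; rewrite ?mulr1n ?mulr0n ?exprS; try lia; ring.
Qed.

Lemma Jmat_binom_entry (R : numFieldType) N i j :
  (Joff N i)%:~R * 'C(i.-1, j)%:R + (Jdiag N i)%:~R * 'C(i, j)%:R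
    + (Joff N i.+1)%:~R * 'C(i.+1, j)%:R
  = 'C(i, j.-1)%:R * (Joff N j)%:~R + 'C(i, j)%:R * (N%:R ^+ 2 - 1 - (Jdiag N j)%:~R)
    + 'C(i, j.+1)%:R * (Joff N j.+1)%:~R :> R.
Proof.
case: (ltngtP j i.+1) => [ji|ij|->]; last first.
- have C0 m : (i < m)%N -> 'C(i, m) = 0%N by exact: bin_small.
  rewrite /= !binn (@bin_small i.-1) ?C0 //; last lia.
  by rewrite !(mulr0, mul0r, mulr1, mul1r, addr0, add0r).
- by rewrite !bin_small ?mulr0 ?mul0r ?addr0 //; lia.
move: ji; rewrite ltnS => ji.
case: i ji => [|i] ji.
  by move: ji; rewrite leqn0 => /eqP ->; rewrite !bin0 bin0n !intr_Joff !intr_Jdiag /=; ring.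
(* Express every binomial coefficient as a rational multiple of [a]. *)
set a : R := 'C(i.+1, j)%:R.
have i1j : (i.+2%:R - j%:R : R) != 0 by rewrite subr_eq0 eqr_nat; apply/eqP; lia.
have Cij : 'C(i, j)%:R = (i.+1%:R - j%:R) * a / i.+1%:R :> R.
  have /(congr1 (GRing.natmul (1 : R))) := mul_bin_down i.+1 j.
  by rewrite !natrM natrB // => <-; rewrite mulrC mulKf // pnatr_eq0.
have Ci2j : 'C(i.+2, j)%:R = i.+2%:R * a / (i.+2%:R - j%:R) :> R.
  have /(congr1 (GRing.natmul (1 : R))) := mul_bin_down i.+2 j.
  by rewrite !natrM natrB /= ?(leqW ji) // => E; rewrite /a E mulrC mulKf.
have Ci1j1 : 'C(i.+1, j.+1)%:R = (i.+1%:R - j%:R) * a / j.+1%:R :> R.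
  have /(congr1 (GRing.natmul (1 : R))) := mul_bin_left i.+1 j.
  by rewrite !natrM natrB // => <-; rewrite mulrC mulKf // pnatr_eq0.
have Ci1jp : 'C(i.+1, j.-1)%:R * (Joff N j)%:~R
             = a * j%:R / (i.+2%:R - j%:R) * (Joff N j)%:~R :> R.
  case: (posnP j) => [->|j0]; first by rewrite intr_Joff0 !mulr0.
  congr (_ * _); apply: (mulfI i1j); rewrite [RHS]mulrC divfK // mulrC /a.
  have /(congr1 (GRing.natmul (1 : R))) := mul_bin_left i.+1 j.-1.
  rewrite prednK // !natrM natrB /=; last lia.
  have -> : (i.+1%:R - j.-1%:R : R) = i.+2%:R - j%:R.
    by rewrite -[in RHS](prednK j0) -!natr1; ring.
  by move=> E; rewrite mulrC -E mulrC.
rewrite /= Cij Ci2j Ci1jp Ci1j1 !intr_Joff !intr_Jdiag.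
have i1 : (i.+1%:R : R) != 0 by rewrite pnatr_eq0.
have j1 : (j.+1%:R : R) != 0 by rewrite pnatr_eq0.
rewrite -!natr1 in i1 j1 i1j *.
by field; rewrite i1 j1 i1j.
Qed.

Lemma mulmx_KmatE (R : comPzRingType) N m (A : 'M[R]_(m, N)) (g : nat -> R) i j :
  (forall l : 'I_N, A i l = g l) ->
  (A *m Kmat R N) i j = g j.-1 * (Joff N j)%:~R
                        + g j * (N%:R ^+ 2 - 1 - (Jdiag N j)%:~R) + g j.+1 * (Joff N j.+1)%:~R.
Proof.
by apply: mulmx_tridiagE; [exact: intr_Joff0 | exact: intr_JoffN].
Qed.

Lemma Jmat_binom (R : numFieldType) N : Jmat R N *m binom_mx R N = binom_mx R N *m Kmat R N.
Proof.
apply/matrixP => i j.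
rewrite (Jmat_mulE (g := fun l => 'C(l, j)%:R)) => [|l]; last by rewrite mxE.
rewrite (mulmx_KmatE (g := fun l => 'C(i, l)%:R)) => [|l]; last by rewrite mxE.
exact: Jmat_binom_entry.
Qed.

Lemma Jmat_sbinom (R : numFieldType) N :
  Jmat R N *m sbinom_mx R N = sbinom_mx R N *m ((N%:R ^+ 2 - 1)%:M - Jmat R N).
Proof. by rewrite /sbinom_mx mulmxA Jmat_binom -[LHS]mulmxA Kmat_sign mulmxA. Qed.

Lemma Tmat_Jmat_comm (R : numFieldType) N : Tmat R N *m Jmat R N = Jmat R N *m Tmat R N.
Proof.
have trJL : (binom_mx R N)^T *m Jmat R N = Kmat R N *m (binom_mx R N)^T.
  by rewrite -[Jmat R N]tr_Jmat -[Kmat R N]tr_tridiag_mx -!trmx_mul Jmat_binom.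
by rewrite Tmat_binom -mulmxA trJL !mulmxA Jmat_binom.
Qed.

Lemma det_anticomm_odd (R : numFieldType) n (A S : 'M[R]_n) :
  odd n -> S \in unitmx -> A *m S = - (S *m A) -> \det A = 0.
Proof.
move=> n_odd S_unit AS.
have /eqP : \det A * \det S *+ 2 = 0.
  have := congr1 determinant AS.
  rewrite -mulmxN -scaleN1r !det_mulmx detZ -signr_odd n_odd expr1 mulN1r => E.
  by rewrite mulr2n {1}E; ring.
rewrite mulrn_eq0 /= mulf_eq0 => /orP[/eqP //|].
by move: S_unit; rewrite unitmxE unitfE => /negPf->.
Qed.

Lemma addr_lamN (R : numFieldType) N : lamN R N + lamN R N = N%:R ^+ 2 - 1.
Proof. by rewrite /lamN; field. Qed.

Lemma Jmat_lamN_sbinom_anticomm (R : numFieldType) N :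
  (Jmat R N - (lamN R N)%:M) *m sbinom_mx R N = - (sbinom_mx R N *m (Jmat R N - (lamN R N)%:M)).
Proof.
rewrite mulmxBl Jmat_sbinom -addr_lamN !mulmxBr !mul_mx_scalar mul_scalar_mx scalerDl.
by rewrite addrAC addrK opprB.
Qed.

Lemma Jmat_lamN_singular (R : numFieldType) N :
  odd N -> \det (Jmat R N - (lamN R N)%:M) = 0.
Proof.
move=> N_odd; apply: (det_anticomm_odd N_odd _ (Jmat_lamN_sbinom_anticomm R N)).
by case: (mulmx1_unit (sbinom_mx_invol R N)).
Qed.

Lemma tr_mulmx_self_ge0 (R : realDomainType) n (x : 'cV[R]_n) : 0 <= (x^T *m x) 0 0.
Proof. by rewrite mxE sumr_ge0 // => i _; rewrite mxE -expr2 sqr_ge0. Qed.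

Lemma tr_mulmx_self_gt0 (R : realDomainType) n (x : 'cV[R]_n) : x != 0 -> 0 < (x^T *m x) 0 0.
Proof.
move=> x_neq0; rewrite lt_def tr_mulmx_self_ge0 andbT; apply: contra x_neq0.
rewrite mxE psumr_eq0 => [/allP x0|i _]; last by rewrite mxE -expr2 sqr_ge0.
apply/eqP/matrixP => i j; rewrite (ord1 j) !mxE.
by have := x0 i (mem_index_enum i); rewrite mxE -expr2 sqrf_eq0 => /eqP.
Qed.

Lemma Tmat_form_ge0 (R : realDomainType) N (x : 'cV[R]_N) :
  0 <= (x^T *m (Tmat R N *m x)) 0 0.
Proof.
have := tr_mulmx_self_ge0 ((binom_mx R N)^T *m x).
by rewrite trmx_mul trmxK Tmat_binom !mulmxA.
Qed.

Lemma ratr_rat (x : rat) : ratr x = x.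
Proof. by rewrite /ratr divq_num_den. Qed.

Lemma Jmat_eigenvector_rat N (w : 'cV[rat]_N) :
  Jmat rat N *m w = lamN rat N *: w -> exists c, w = c *: vvec N.
Proof.
case/Jmat_eigenvector_unique => c ->; exists c; congr (_ *: _).
by apply/matrixP => i j; rewrite mxE ratr_rat.
Qed.

Lemma vvec_neq0 N : (0 < N)%N -> vvec N != 0.
Proof. by move=> N0; apply/negP => /eqP/matrixP/(_ (Ordinal N0) 0); rewrite !mxE vseq0. Qed.

Lemma Jmat_vvec N : odd N -> Jmat rat N *m vvec N = lamN rat N *: vvec N.
Proof.
move=> N_odd; have /eqP/det0P[r r_neq0 r_ker] := Jmat_lamN_singular rat N_odd.
have Jr : Jmat rat N *m r^T = lamN rat N *: r^T.
  have /(congr1 trmx)/eqP := r_ker.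
  rewrite trmx_mul linearB /= tr_Jmat tr_scalar_mx trmx0 mulmxBl mul_scalar_mx.
  by rewrite subr_eq0 => /eqP.
have [c rE] := Jmat_eigenvector_rat Jr.
have c_neq0 : c != 0 by apply: contraNneq r_neq0 => c0; rewrite -trmx_eq0 rE c0 scale0r.
by apply: (scalerI c_neq0); rewrite scalemxAr -rE Jr rE !scalerA mulrC.
Qed.

Lemma Tmat_vvec N : odd N -> Tmat rat N *m vvec N = vvec N.
Proof.
move=> N_odd; have N0 : (0 < N)%N by case: N N_odd.
set J := Jmat rat N; set T := Tmat rat N; set S := sbinom_mx rat N; set v := vvec N.
have Jv : J *m v = lamN rat N *: v := Jmat_vvec N_odd.
have [c Tv] : exists c, T *m v = c *: v.
  apply: Jmat_eigenvector_rat.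
  by rewrite mulmxA -Tmat_Jmat_comm -mulmxA Jv scalemxAr.
have [s Sv] : exists s, S *m v = s *: v.
  apply: Jmat_eigenvector_rat.
  rewrite mulmxA Jmat_sbinom -mulmxA mulmxBl mul_scalar_mx Jv -scalerBl.
  by rewrite -addr_lamN addrK scalemxAr.
have entry0 a b : a *: v = b *: v -> a = b.
  by move/matrixP/(_ (Ordinal N0) 0); rewrite !mxE vseq0 !mulr1.
have s2 : s * s = 1.
  apply: entry0; rewrite scale1r -scalerA -Sv scalemxAr -Sv mulmxA.
  by rewrite sbinom_mx_invol mul1mx.
have c2 : c * c = 1.
  have s_neq0 : s != 0 by apply: contra_eq_neq s2 => ->; rewrite mul0r eq_sym oner_neq0.
  have TST : T *m S *m T = S := Tmat_sbinom_Tmat rat N.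
  apply: (mulIf s_neq0); apply: entry0; rewrite mul1r -Sv -{1}TST.
  have -> : T *m S *m T *m v = T *m (S *m (T *m v)) by rewrite !mulmxA.
  rewrite Tv -scalemxAr Sv -!scalemxAr Tv !scalerA.
  by congr (_ *: _); ring.
have c_ge0 : 0 <= c.
  have := Tmat_form_ge0 v; rewrite -/T Tv -scalemxAr mxE.
  by rewrite (pmulr_lge0 _ (tr_mulmx_self_gt0 (vvec_neq0 N0))).
have c1 : c = 1 by nra.
by rewrite Tv c1 scale1r.
Qed.

Theorem mainTheorem13 (N : nat) (hN : (3 <= N)%N) (hodd : odd N) :
  [/\ vvec N != 0,
      Jmat rat N *m vvec N = lamN rat N *: vvec N,
      Tmat rat N *m vvec N = vvec N
    & forall (R : numFieldType) (w : 'cV[R]_N),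
        w != 0 -> Jmat R N *m w = lamN R N *: w ->
        exists c : R, w = c *: map_mx (fun q : rat => ratr q) (vvec N)].
Proof.
split; [apply: vvec_neq0; lia | exact: Jmat_vvec | exact: Tmat_vvec |].
by move=> R w _; apply: Jmat_eigenvector_unique.
Qed.
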